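(* Let $N\ge 1$, let $\mathcal{S}_{>0}=\{\lambda\in\mathbb{R}^N:\lambda_i>0,\ \sum_{i=1}^N\lambda_i=1\}$ be equipped with the Fisher--Rao metric $g_{ij}(\lambda)=\delta_{ij}/(4\lambda_i)$, and let $\beta_1,\ldots,\beta_N>0$ be the singular values of an operator $B$. Define the aligned transport map $\Phi_B:\mathcal{S}_{>0}\to\mathcal{S}_{>0}$ by \[ \Phi_B(\lambda)_i=\frac{\beta_i^2\lambda_i}{\sum_{j=1}^N\beta_j^2\lambda_j}. \] Then $\Phi_B$ is an isometry of $(\mathcal{S}_{>0},g)$ if and only if $\beta_1=\beta_2=\cdots=\beta_N$.
   Context: $\Phi_B$ is the map on spectral states induced by composing with $B$ under SVD alignment (the right singular vectors of $B$ coincide with the left singular vectors of the preceding operator $A$): if $\lambda=\lambda(A)$ is the normalised squared-singular-value vector of $A$, then $\Phi_B(\lambda)=\lambda(BA)$. The Fisher--Rao distance induced by $g$ is $d(\lambda,\mu)=2\arccos\big(\sum_i\sqrt{\lambda_i\mu_i}\big)$. *)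

From HB Require Import structures.
From mathcomp Require Import all_boot all_order all_algebra.
From mathcomp Require Import all_classical all_reals all_analysis.
Set Implicit Arguments. Unset Strict Implicit. Unset Printing Implicit Defensive.
Import Order.TTheory GRing.Theory Num.Theory.
Local Open Scope ring_scope.

Section FR.
Variables (R : realType) (N : nat).

Definition in_simplex_pos (l : 'I_N -> R) : Prop :=
  (forall i, 0 < l i) /\ \sum_(i < N) l i = 1.

Definition tangent (v : 'I_N -> R) : Prop := \sum_(i < N) v i = 0.

Definition FR_metric (l u w : 'I_N -> R) : R :=
  \sum_(i < N) u i * w i / (4 * l i).

Definition Phi (beta : 'I_N -> R) (l : 'I_N -> R) : 'I_N -> R :=
  fun i => beta i ^+ 2 * l i / \sum_(j < N) beta j ^+ 2 * l j.

Definition pushforward (F : ('I_N -> R) -> ('I_N -> R)) (l v : 'I_N -> R)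
  : 'I_N -> R :=
  fun i => derive1 (fun t : R => F (fun j => l j + t * v j) i) 0.

Definition FR_isometry (F : ('I_N -> R) -> ('I_N -> R)) : Prop :=
  [/\ (forall l, in_simplex_pos l -> in_simplex_pos (F l)),
      (forall mu, in_simplex_pos mu ->
         exists l, in_simplex_pos l /\ F l = mu),
      (forall l1 l2, in_simplex_pos l1 -> in_simplex_pos l2 ->
         F l1 = F l2 -> l1 = l2) &
      (forall l u w, in_simplex_pos l -> tangent u -> tangent w ->
         FR_metric (F l) (pushforward F l u) (pushforward F l w)
         = FR_metric l u w)].

End FR.

From Pilot Require Import Defs.
From HB Require Import structures.
From mathcomp Require Import all_boot all_order all_algebra.
From mathcomp Require Import all_classical all_reals all_analysis.
From mathcomp Require Import ring.
Set Implicit Arguments. Unset Strict Implicit. Unset Printing Implicit Defensive.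
Import Order.TTheory GRing.Theory Num.Theory.
Local Open Scope ring_scope.

(* If all beta_k equal c, Phi_B is the identity on the simplex and its
   differential is the identity on tangent vectors.  Conversely, write
   b_k = beta_k^2, S = sum_k b_k l_k and T = sum_k b_k u_k; the pulled-back
   metric is (S sum_k b_k u_k^2 / l_k - T^2) / (4 S^2).  At the barycentre and
   for u = e_i - e_j, comparing it with g(u, u) = N/2 gives
   (d_i - d_j)^2 = N m (d_i + d_j), where m is the mean of b and d = b - m.
   Summed over all ordered pairs i <> j the right-hand sides add up to a
   multiple of sum_k d_k = 0, hence d, and so beta, is constant. *)

Lemma is_derive_affine (R : realType) (a b x : R) :
  is_derive x 1 (fun t : R => a + t * b) b.
Proof.
have -> : (fun t : R => a + t * b) = cst a + ( *%R ^~ b) by apply/funext.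
by apply: is_derive_eq; rewrite scaler0 !add0r /GRing.scale /= mulr1.
Qed.

Lemma derive1_affine_ratio (R : realType) (a b c d : R) : c != 0 ->
  derive1 (fun t : R => (a + t * b) / (c + t * d)) 0 = (b * c - a * d) / c ^+ 2.
Proof.
move=> c0; have cinv := is_deriveV _ (is_derive_affine c d 0).
rewrite mul0r addr0 in cinv.
have /(@derive_val _ _ _ _ _ _ _) der :=
  is_deriveM (is_derive_affine a b 0) (cinv c0).
rewrite derive1E -[fun t => _ / _]/((fun t : R => a + t * b) *
  (fun t => (c + t * d)^-1)) {}der /= !mul0r !addr0 /GRing.scale /=.
by field.
Qed.

Lemma sum_indicator_mul (R : pzSemiRingType) (N : nat) (i : 'I_N)
  (F : 'I_N -> R) :
  \sum_(k < N) (k == i)%:R * F k = F i.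
Proof.
rewrite (bigD1 i) //= eqxx mul1r big1 ?addr0 // => k /negbTE ->.
by rewrite mul0r.
Qed.

Section UniformPoint.
Variables (R : realType) (N : nat).

Definition uniform : 'I_N -> R := fun=> N%:R^-1.

Definition pair_vec (i j : 'I_N) : 'I_N -> R :=
  fun k => (k == i)%:R - (k == j)%:R.

Lemma uniform_in_simplex : (0 < N)%N -> in_simplex_pos uniform.
Proof.
move=> N_gt0; split=> [k|]; first by rewrite invr_gt0 ltr0n.
by rewrite sumr_const card_ord -[_ *+ N]mulr_natr mulVf // pnatr_eq0 -lt0n.
Qed.

Lemma sum_pair_vec_mul (i j : 'I_N) (F : 'I_N -> R) :
  \sum_(k < N) pair_vec i j k * F k = F i - F j.
Proof.
by under eq_bigr do rewrite mulrBl; rewrite sumrB !sum_indicator_mul.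
Qed.

Lemma pair_vec_tangent (i j : 'I_N) : tangent (pair_vec i j).
Proof.
rewrite /tangent; under eq_bigr do rewrite -[pair_vec _ _ _]mulr1.
by rewrite sum_pair_vec_mul subrr.
Qed.

Lemma sum_pair_vec_sqr_mul (i j : 'I_N) (F : 'I_N -> R) : i != j ->
  \sum_(k < N) pair_vec i j k ^+ 2 * F k = F i + F j.
Proof.
move=> neq_ij; under eq_bigr do rewrite expr2 -mulrA.
rewrite sum_pair_vec_mul /pair_vec !eqxx (negbTE neq_ij) eq_sym (negbTE neq_ij).
by rewrite subr0 sub0r mul1r mulN1r opprK.
Qed.

Lemma FR_metric_uniform_pair_vec (i j : 'I_N) : i != j ->
  FR_metric uniform (pair_vec i j) (pair_vec i j) = N%:R / 2.
Proof.
move=> neq_ij; rewrite /FR_metric.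
under eq_bigr do rewrite -expr2.
have N_gt0 : (0 < N)%N := leq_ltn_trans (leq0n i) (ltn_ord i).
have N_neq0 : N%:R != 0 :> R by rewrite pnatr_eq0 -lt0n.
by rewrite sum_pair_vec_sqr_mul // /uniform; field.
Qed.

End UniformPoint.

Arguments uniform {R N}.
Arguments pair_vec {R N}.

Lemma zero_sum_sqr_gap_const (R : realDomainType) (N : nat) (d : 'I_N -> R)
  (a : R) :
  (forall i j, i != j -> (d i - d j) ^+ 2 = a * (d i + d j)) ->
  \sum_(i < N) d i = 0 -> forall i j, d i = d j.
Proof.
move=> gap sum_d0.
have gapE i j : (d i - d j) ^+ 2 = a * (d i + d j) - (j == i)%:R * (2 * a * d i).
  have [->|neq_ji] := eqVneq j i; last by rewrite mul0r subr0 gap // eq_sym.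
  by rewrite subrr mul1r; ring.
have row_sum i : \sum_(j < N) (d i - d j) ^+ 2 = (N%:R - 2) * a * d i.
  under eq_bigr do rewrite gapE.
  rewrite sumrB sum_indicator_mul -mulr_sumr big_split /= sum_d0 addr0.
  by rewrite sumr_const card_ord -mulr_natl; ring.
have total : \sum_(i < N) \sum_(j < N) (d i - d j) ^+ 2 = 0.
  by under eq_bigr do rewrite row_sum; rewrite -mulr_sumr sum_d0 mulr0.
move=> i j.
have row_i := psumr_eq0P (fun i _ => sumr_ge0 _ (fun j _ => sqr_ge0 (d i - d j)))
  total (i := i) isT.
have /eqP := psumr_eq0P (fun j _ => sqr_ge0 (d i - d j)) row_i (i := j) isT.
by rewrite sqrf_eq0 subr_eq0 => /eqP.
Qed.

Section AlignedTransport.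
Variables (R : realType) (N : nat) (beta : 'I_N -> R).

Definition Phi_denom (x : 'I_N -> R) : R := \sum_(j < N) beta j ^+ 2 * x j.

Lemma Phi_denom_gt0 (l : 'I_N -> R) : (0 < N)%N ->
  (forall k, 0 < beta k) -> (forall k, 0 < l k) -> 0 < Phi_denom l.
Proof.
move=> N_gt0 beta_gt0 l_gt0; rewrite /Phi_denom (bigD1 (Ordinal N_gt0)) //=.
rewrite ltr_wpDr ?mulr_gt0 ?exprn_gt0 ?sumr_ge0 // => k _.
by rewrite mulr_ge0 ?exprn_ge0 ?ltW.
Qed.

Lemma pushforward_Phi (l v : 'I_N -> R) (k : 'I_N) : Phi_denom l != 0 ->
  Defs.pushforward (Phi beta) l v k =
  beta k ^+ 2 * (v k * Phi_denom l - l k * Phi_denom v) / Phi_denom l ^+ 2.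
Proof.
move=> denom_neq0; rewrite /Defs.pushforward.
under [fun t => _]funext => t.
  rewrite /Phi mulrDr -/(Phi_denom l).
  rewrite (_ : \sum_(j < N) _ = Phi_denom l + t * Phi_denom v); last first.
    by rewrite /Phi_denom mulr_sumr -big_split; apply: eq_bigr => j _ /=; ring.
  rewrite (_ : _ * (t * v k) = t * (beta k ^+ 2 * v k)); last by ring.
  over.
by rewrite derive1_affine_ratio //; field.
Qed.

Lemma FR_metric_Phi_pushforward (l u : 'I_N -> R) :
  (forall k, beta k != 0) -> (forall k, l k != 0) -> Phi_denom l != 0 ->
  FR_metric (Phi beta l) (Defs.pushforward (Phi beta) l u)
    (Defs.pushforward (Phi beta) l u) =
  (Phi_denom l * \sum_(k < N) beta k ^+ 2 * u k ^+ 2 / l k - Phi_denom u ^+ 2)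
    / (4 * Phi_denom l ^+ 2).
Proof.
move=> beta_neq0 l_neq0 denom_neq0; rewrite /FR_metric.
under eq_bigr => k _ do rewrite pushforward_Phi // /Phi -/(Phi_denom l).
set S := Phi_denom l; set T := Phi_denom u.
transitivity (\sum_(k < N) (S ^+ 2 * (beta k ^+ 2 * u k ^+ 2 / l k)
   - 2 * S * T * (beta k ^+ 2 * u k) + T ^+ 2 * (beta k ^+ 2 * l k))
   / (4 * S ^+ 3)).
  by apply: eq_bigr => k _; field; rewrite denom_neq0 l_neq0 beta_neq0.
rewrite -mulr_suml big_split sumrB /= -!mulr_sumr.
rewrite -[\sum_(k < N) _ * u k]/T -[\sum_(k < N) _ * l k]/S.
by field.
Qed.

Definition beta_sqr_dev (k : 'I_N) : R := beta k ^+ 2 - Phi_denom uniform.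

Lemma sum_beta_sqr_dev : (0 < N)%N -> \sum_(k < N) beta_sqr_dev k = 0.
Proof.
move=> N_gt0; rewrite sumrB sumr_const card_ord /Phi_denom /uniform -mulr_suml.
by rewrite -[_ *+ N]mulr_natr mulfVK ?subrr // pnatr_eq0 -lt0n.
Qed.

Lemma Phi_isometric_at_uniform_pair_vec (i j : 'I_N) :
  (0 < N)%N -> (forall k, 0 < beta k) -> i != j ->
  let u := pair_vec i j in
  FR_metric (Phi beta uniform) (Defs.pushforward (Phi beta) uniform u)
    (Defs.pushforward (Phi beta) uniform u) = FR_metric uniform u u ->
  (beta_sqr_dev i - beta_sqr_dev j) ^+ 2 =
  N%:R * Phi_denom uniform * (beta_sqr_dev i + beta_sqr_dev j).
Proof.
move=> N_gt0 beta_gt0 neq_ij u.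
have N_neq0 : N%:R != 0 :> R by rewrite pnatr_eq0 -lt0n.
have m_gt0 := Phi_denom_gt0 N_gt0 beta_gt0 (uniform_in_simplex R N_gt0).1.
have beta_neq0 k : beta k != 0 by rewrite gt_eqF.
have uniform_neq0 (k : 'I_N) : uniform k != 0 :> R by rewrite invr_eq0.
rewrite FR_metric_Phi_pushforward ?gt_eqF //.
have -> : Phi_denom u = beta i ^+ 2 - beta j ^+ 2.
  by rewrite /Phi_denom; under eq_bigr do rewrite mulrC; rewrite sum_pair_vec_mul.
under eq_bigr do rewrite mulrAC mulrC.
rewrite sum_pair_vec_sqr_mul // FR_metric_uniform_pair_vec // /uniform !invrK.
rewrite /beta_sqr_dev; set m := Phi_denom uniform => preserved.
apply/eqP; rewrite -subr_eq0; apply/eqP.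
transitivity (- (4 * m ^+ 2) *
  ((m * (beta i ^+ 2 * N%:R + beta j ^+ 2 * N%:R)
    - (beta i ^+ 2 - beta j ^+ 2) ^+ 2) / (4 * m ^+ 2) - N%:R / 2)).
  by field; rewrite gt_eqF.
by rewrite preserved subrr mulr0.
Qed.

Lemma Phi_denom_const (c : R) (x : 'I_N -> R) : (forall k, beta k = c) ->
  Phi_denom x = c ^+ 2 * \sum_(k < N) x k.
Proof.
by move=> beta_c; rewrite mulr_sumr; apply: eq_bigr => k _; rewrite beta_c.
Qed.

Lemma Phi_const (c : R) (l : 'I_N -> R) : (forall k, beta k = c) -> c != 0 ->
  \sum_(k < N) l k = 1 -> Phi beta l = l.
Proof.
move=> beta_c c_neq0 sum_l; apply/funext => k.
by rewrite /Phi -/(Phi_denom l) (Phi_denom_const _ beta_c) sum_l beta_c; field.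
Qed.

Lemma pushforward_Phi_const (c : R) (l v : 'I_N -> R) :
  (forall k, beta k = c) -> c != 0 -> \sum_(k < N) l k = 1 -> tangent v ->
  Defs.pushforward (Phi beta) l v = v.
Proof.
move=> beta_c c_neq0 sum_l sum_v; apply/funext => k.
have c2_neq0 : c ^+ 2 != 0 by rewrite expf_neq0.
rewrite pushforward_Phi !(Phi_denom_const _ beta_c) sum_l ?mulr1 //.
rewrite (_ : \sum_(k < N) v k = 0) //.
by rewrite beta_c; field.
Qed.

End AlignedTransport.

Theorem mainTheorem6 (R : realType) (N : nat) (hN : (1 <= N)%N)
  (beta : 'I_N -> R) (hbeta : forall i, 0 < beta i) :
  FR_isometry (Phi beta) <-> (forall i j, beta i = beta j).
Proof.
split.
- case=> _ _ _ preserves_metric i j.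
  have pair_gap i' j' (neq_ij : i' != j') :=
    Phi_isometric_at_uniform_pair_vec hN hbeta neq_ij
      (preserves_metric _ _ _ (uniform_in_simplex R hN)
         (pair_vec_tangent R i' j') (pair_vec_tangent R i' j')).
  have := zero_sum_sqr_gap_const pair_gap (sum_beta_sqr_dev beta hN) i j.
  rewrite /beta_sqr_dev => /addIr /eqP.
  by rewrite eqrXn2 ?ltW // => /eqP.
- move=> beta_eq; set c := beta (Ordinal hN).
  have beta_c k : beta k = c by apply: beta_eq.
  have c_neq0 : c != 0 by rewrite gt_eqF ?hbeta.
  split.
  + by move=> l [l_gt0 sum_l]; rewrite (Phi_const beta_c).
  + by move=> mu [mu_gt0 sum_mu]; exists mu; rewrite (Phi_const beta_c).
  + by move=> l1 l2 [_ sum_l1] [_ sum_l2]; rewrite !(Phi_const beta_c).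
  + move=> l u w [_ sum_l] tu tw.
    by rewrite (Phi_const beta_c) // !(pushforward_Phi_const beta_c).
Qed.
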